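(* Let $\varepsilon>0$ and $m(x)=\tanh x$. For $\mathcal{E}\in(0,1)$ let $x_\pm=\pm\operatorname{arctanh}(\sqrt{\mathcal{E}})$ be the two solutions of $\tanh^2 x=\mathcal{E}$, and define $$\Phi(\mathcal{E}):=\frac{1}{\varepsilon}\int_{x_-}^{x_+}\sqrt{\mathcal{E}-\tanh^2 x}\,dx,$$ with $\Phi(0):=0$. Then $\Phi(\mathcal{E})=\frac{\pi}{\varepsilon}\bigl(1-\sqrt{1-\mathcal{E}}\bigr)$ for $\mathcal{E}\in[0,1)$. Consequently, for $\sigma_{\mathcal{D}}\in\{-1,+1\}$ and integers $n\ge0$ with $0\le\varepsilon\bigl(n+\frac{\sigma_{\mathcal{D}}+1}{2}\bigr)<1$, the (exact, error-free) modified Bohr–Sommerfeld condition $$\Phi(\mathcal{E})=\Bigl(n+\frac{\sigma_{\mathcal{D}}+1}{2}\Bigr)\pi$$ has the unique solution $\mathcal{E}\in[0,1)$ given by $$\mathcal{E}_n^{(\sigma_{\mathcal{D}})}=1-\Bigl[1-\varepsilon\Bigl(n+\frac{\sigma_{\mathcal{D}}+1}{2}\Bigr)\Bigr]^2 .$$ In particular $\mathcal{E}_n^{(-1)}=1-(1-\varepsilon n)^2=\lambda_n^{(+)}$ and $\mathcal{E}_n^{(+1)}=1-(1-\varepsilon(n+1))^2=\lambda_n^{(-)}$ coincide exactly with the Pöschl–Teller eigenvalues of the upper and lower components of $D_\varepsilon^2$, and $n=0$, $\sigma_{\mathcal{D}}=-1$ gives $\mathcal{E}=0$.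
   Context: $D_\varepsilon=\begin{bmatrix}0 & m-\varepsilon\partial_x\\ m+\varepsilon\partial_x & 0\end{bmatrix}$ with $m=\tanh$, so $D_\varepsilon^2=\operatorname{diag}(-\varepsilon^2\partial_x^2+\tanh^2x-\varepsilon\operatorname{sech}^2x,\;-\varepsilon^2\partial_x^2+\tanh^2x+\varepsilon\operatorname{sech}^2x)$; the pseudo-spin index $\sigma_{\mathcal{D}}=-1$ labels the upper component and $\sigma_{\mathcal{D}}=+1$ the lower. The numbers $\lambda_k^{(+)}=1-(1-\varepsilon k)^2$ and $\lambda_k^{(-)}=1-(1-\varepsilon(k+1))^2$ are the discrete eigenvalues of the upper and lower components respectively. *)

From Stdlib Require Import Reals.
From Coquelicot Require Import Coquelicot.
Open Scope R_scope.

Definition tanh (x : R) : R := (exp x - exp (- x)) / (exp x + exp (- x)).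
Definition atanh (y : R) : R := ln ((1 + y) / (1 - y)) / 2.

Definition x_plus (E : R) : R := atanh (sqrt E).
Definition x_minus (E : R) : R := - atanh (sqrt E).

Definition Phi (eps E : R) : R :=
  if Req_EM_T E 0 then 0
  else / eps * RInt (fun x => sqrt (E - (tanh x) ^ 2)) (x_minus E) (x_plus E).

Definition lambda_plus (eps : R) (k : nat) : R := 1 - (1 - eps * INR k) ^ 2.
Definition lambda_minus (eps : R) (k : nat) : R := 1 - (1 - eps * (INR k + 1)) ^ 2.

Definition shift (n : nat) (sigma : Z) : R := INR n + (IZR sigma + 1) / 2.
Definition E_level (eps : R) (n : nat) (sigma : Z) : R := 1 - (1 - eps * shift n sigma) ^ 2.

(* Substituting tanh x = sqrt E * sin t gives
   sqrt (E - tanh x ^ 2) dx = E cos t ^ 2 / (1 - E sin t ^ 2) dt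
                            = (1 - (1 - E) / (1 - E sin t ^ 2)) dt,
   whose integral over [-pi/2, pi/2] is pi - pi sqrt (1 - E).  In the
   Weierstrass variable v = tan (t/2), running over [-1, 1], this integrand is
   a rational function of v with an explicit primitive.  The quantization
   condition then reduces to 1 - sqrt (1 - E) = eps * k, solved by squaring. *)

From Pilot Require Import Defs.
From Stdlib Require Import Reals Lra Psatz.
From Coquelicot Require Import Coquelicot.
Open Scope R_scope.

(* [Reals] exports its own [tanh], which shadows the one [Phi] is defined with. *)

Lemma tanh_exp2 (x : R) : Defs.tanh x = (exp (2 * x) - 1) / (exp (2 * x) + 1).
Proof.
  unfold Defs.tanh. replace (2 * x) with (x + x) by ring. rewrite exp_plus, exp_Ropp.
  pose proof (exp_pos x). field. split; nra.
Qed.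

Lemma tanh_atanh (u : R) : -1 < u < 1 -> Defs.tanh (atanh u) = u.
Proof.
  intros Hu. rewrite tanh_exp2. unfold atanh.
  replace (2 * (ln ((1 + u) / (1 - u)) / 2)) with (ln ((1 + u) / (1 - u))) by field.
  rewrite exp_ln by (apply Rdiv_lt_0_compat; lra). field. split; lra.
Qed.

Lemma atanh_opp (u : R) : -1 < u < 1 -> atanh (- u) = - atanh u.
Proof.
  intros Hu. unfold atanh.
  replace ((1 + - u) / (1 - - u)) with (/ ((1 + u) / (1 - u))) by (field; lra).
  rewrite ln_Rinv by (apply Rdiv_lt_0_compat; lra). field.
Qed.

Lemma is_derive_atanh (u : R) : -1 < u < 1 -> is_derive atanh u (/ (1 - u ^ 2)).
Proof.
  intros Hu. unfold atanh. auto_derive.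
  - repeat split; try lra. apply Rdiv_lt_0_compat; lra.
  - field. repeat split; nra.
Qed.

Lemma continuous_sqrt_sub_tanh_sq (a x : R) :
  continuous (fun x => sqrt (a - Defs.tanh x ^ 2)) x.
Proof.
  apply continuous_sqrt_comp, (ex_derive_continuous (K := R_AbsRing) (V := R_NormedModule)).
  unfold Defs.tanh. auto_derive. pose proof (exp_pos x). pose proof (exp_pos (- x)). lra.
Qed.

Definition weierstrass_sin (v : R) : R := 2 * v / (1 + v ^ 2).

Lemma weierstrass_sin_bound (v : R) : -1 <= weierstrass_sin v <= 1.
Proof.
  assert (Hpos : 0 < 1 + v ^ 2) by nra.
  assert (Hm : 1 - weierstrass_sin v = (1 - v) ^ 2 / (1 + v ^ 2))
    by (unfold weierstrass_sin; field; lra).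
  assert (Hp : 1 + weierstrass_sin v = (1 + v) ^ 2 / (1 + v ^ 2))
    by (unfold weierstrass_sin; field; lra).
  assert (0 <= (1 - v) ^ 2 / (1 + v ^ 2)) by (apply Rle_mult_inv_pos; [apply pow2_ge_0 | lra]).
  assert (0 <= (1 + v) ^ 2 / (1 + v ^ 2)) by (apply Rle_mult_inv_pos; [apply pow2_ge_0 | lra]).
  lra.
Qed.

Lemma weierstrass_cos_sq (v : R) :
  1 - weierstrass_sin v ^ 2 = ((1 - v ^ 2) / (1 + v ^ 2)) ^ 2.
Proof. unfold weierstrass_sin. field. nra. Qed.

Lemma is_derive_weierstrass_sin (v : R) :
  is_derive weierstrass_sin v (2 * (1 - v ^ 2) / (1 + v ^ 2) ^ 2).
Proof. unfold weierstrass_sin. auto_derive; [nra | field; nra]. Qed.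

Lemma quartic_pos (a v : R) : 0 < a -> 0 < (1 - v ^ 2) ^ 2 + 4 * a * v ^ 2.
Proof.
  intros Ha. destruct (Req_dec v 0) as [-> | Hv]; [nra |].
  assert (0 < v ^ 2) by (apply pow2_gt_0; exact Hv).
  pose proof (pow2_ge_0 (1 - v ^ 2)). nra.
Qed.

(* The integrand in the variable v, with c = sqrt (1 - E).  Its partial
   fractions 2 / (1 + v^2) - 2 c^2 (1 + v^2) / (...) correspond to
   1 - (1 - E) / (1 - E sin t ^ 2). *)
Definition action_integrand (c v : R) : R :=
  2 * (1 - c ^ 2) * (1 - v ^ 2) ^ 2
  / ((1 + v ^ 2) * ((1 - v ^ 2) ^ 2 + 4 * c ^ 2 * v ^ 2)).

(* Up to a locally constant function, the second term is c * atan ((v - 1/v) / (2 c)),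
   the primitive of the second partial fraction; this form is smooth across v = 0. *)
Definition action_primitive (c v : R) : R :=
  2 * atan v
  - c * (2 * atan v + atan (2 * (c - 1) * v * (1 - v ^ 2) / ((1 - v ^ 2) ^ 2 + 4 * c * v ^ 2))).

Lemma continuous_action_integrand (c v : R) : 0 < c -> continuous (action_integrand c) v.
Proof.
  intros Hc. apply (ex_derive_continuous (K := R_AbsRing) (V := R_NormedModule)).
  unfold action_integrand. pose proof (quartic_pos (c ^ 2) v ltac:(nra)).
  auto_derive. apply Rgt_not_eq, Rmult_lt_0_compat; nra.
Qed.

Lemma is_derive_action_primitive (c v : R) :
  0 < c -> is_derive (action_primitive c) v (action_integrand c v).
Proof.
  intros Hc.
  pose proof (quartic_pos c v Hc) as Hq.
  pose proof (quartic_pos (c ^ 2) v ltac:(nra)) as Hq2.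
  assert (Hprod : 0 < (1 + v ^ 2) ^ 2 * ((1 - v ^ 2) ^ 2 + 4 * c ^ 2 * v ^ 2))
    by (apply Rmult_lt_0_compat; nra).
  unfold action_primitive, action_integrand. auto_derive; [lra |].
  field. repeat split; apply Rgt_not_eq; nra.
Qed.

Lemma action_primitive_increment (c : R) :
  action_primitive c 1 - action_primitive c (-1) = PI * (1 - c).
Proof.
  unfold action_primitive.
  replace (2 * (c - 1) * 1 * (1 - 1 ^ 2) / ((1 - 1 ^ 2) ^ 2 + 4 * c * 1 ^ 2)) with 0
    by (unfold Rdiv; ring).
  replace (2 * (c - 1) * -1 * (1 - (-1) ^ 2) / ((1 - (-1) ^ 2) ^ 2 + 4 * c * (-1) ^ 2))
    with 0 by (unfold Rdiv; ring).
  replace (-1) with (- (1)) by ring. rewrite atan_0, atan_opp, atan_1. field.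
Qed.

Lemma RInt_action_integrand (c : R) : 0 < c -> RInt (action_integrand c) (-1) 1 = PI * (1 - c).
Proof.
  intros Hc. rewrite <- action_primitive_increment. apply is_RInt_unique.
  apply (is_RInt_derive (action_primitive c)).
  - intros v _. exact (is_derive_action_primitive c v Hc).
  - intros v _. exact (continuous_action_integrand c v Hc).
Qed.

Section Substitution.

Variables s c : R.
Hypotheses (Hs : 0 < s) (Hc : 0 < c) (Hsc : s ^ 2 + c ^ 2 = 1).

Definition weierstrass_subst (v : R) : R := atanh (s * weierstrass_sin v).

Lemma scaled_weierstrass_sin_bound (v : R) : -1 < s * weierstrass_sin v < 1.
Proof. pose proof (weierstrass_sin_bound v). assert (s < 1) by nra. nra. Qed.

Lemma weierstrass_subst_one : weierstrass_subst 1 = atanh s.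
Proof. unfold weierstrass_subst, weierstrass_sin. f_equal. field. Qed.

Lemma weierstrass_subst_opp_one : weierstrass_subst (-1) = - atanh s.
Proof.
  unfold weierstrass_subst, weierstrass_sin. rewrite <- atanh_opp by nra.
  f_equal. field.
Qed.

Lemma one_sub_scaled_weierstrass_sin_sq (v : R) :
  1 - (s * weierstrass_sin v) ^ 2 = ((1 - v ^ 2) ^ 2 + 4 * c ^ 2 * v ^ 2) / (1 + v ^ 2) ^ 2.
Proof.
  unfold weierstrass_sin. replace (c ^ 2) with (1 - s ^ 2) by lra. field. nra.
Qed.

Definition weierstrass_subst_deriv (v : R) : R :=
  2 * s * (1 - v ^ 2) / ((1 - v ^ 2) ^ 2 + 4 * c ^ 2 * v ^ 2).

Lemma is_derive_weierstrass_subst (v : R) :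
  is_derive weierstrass_subst v (weierstrass_subst_deriv v).
Proof.
  pose proof (quartic_pos (c ^ 2) v ltac:(nra)) as Hq.
  assert (Hw : is_derive (fun v => s * weierstrass_sin v) v
                 (s * (2 * (1 - v ^ 2) / (1 + v ^ 2) ^ 2))).
  { apply (is_derive_scal weierstrass_sin). apply is_derive_weierstrass_sin. }
  pose proof (is_derive_comp atanh _ v _ _
                (is_derive_atanh _ (scaled_weierstrass_sin_bound v)) Hw) as H.
  replace (weierstrass_subst_deriv v) with
    (s * (2 * (1 - v ^ 2) / (1 + v ^ 2) ^ 2) * / (1 - (s * weierstrass_sin v) ^ 2));
    [exact H |].
  rewrite one_sub_scaled_weierstrass_sin_sq. unfold weierstrass_subst_deriv.
  field. split; nra.
Qed.

Lemma continuous_weierstrass_subst_deriv (v : R) : continuous weierstrass_subst_deriv v.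
Proof.
  apply (ex_derive_continuous (K := R_AbsRing) (V := R_NormedModule)).
  unfold weierstrass_subst_deriv. pose proof (quartic_pos (c ^ 2) v ltac:(nra)).
  auto_derive. lra.
Qed.

Lemma sqrt_sub_tanh_sq_weierstrass_subst (v : R) : -1 <= v <= 1 ->
  sqrt (s ^ 2 - Defs.tanh (weierstrass_subst v) ^ 2) = s * ((1 - v ^ 2) / (1 + v ^ 2)).
Proof.
  intros Hv. unfold weierstrass_subst. rewrite tanh_atanh by apply scaled_weierstrass_sin_bound.
  replace (s ^ 2 - (s * weierstrass_sin v) ^ 2) with (s ^ 2 * (1 - weierstrass_sin v ^ 2))
    by ring.
  rewrite weierstrass_cos_sq, <- Rpow_mult_distr. apply sqrt_pow2.
  apply Rmult_le_pos; [lra | apply Rle_mult_inv_pos; nra].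
Qed.

Lemma RInt_sqrt_sub_tanh_sq :
  RInt (fun x => sqrt (s ^ 2 - Defs.tanh x ^ 2)) (- atanh s) (atanh s) = PI * (1 - c).
Proof.
  rewrite <- weierstrass_subst_opp_one, <- weierstrass_subst_one.
  rewrite <- (RInt_comp _ weierstrass_subst weierstrass_subst_deriv).
  - rewrite <- (RInt_action_integrand c Hc). apply RInt_ext.
    rewrite Rmin_left, Rmax_right by lra. intros v Hv.
    rewrite sqrt_sub_tanh_sq_weierstrass_subst by lra.
    pose proof (quartic_pos (c ^ 2) v ltac:(nra)).
    unfold scal; simpl; unfold mult; simpl. unfold weierstrass_subst_deriv, action_integrand.
    replace (1 - c ^ 2) with (s ^ 2) by lra. field. split; nra.
  - intros x _. apply continuous_sqrt_sub_tanh_sq.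
  - intros v _. split; [apply is_derive_weierstrass_subst | apply continuous_weierstrass_subst_deriv].
Qed.

End Substitution.

Lemma Phi_closed_form (eps E : R) :
  0 <= E < 1 -> Phi eps E = PI / eps * (1 - sqrt (1 - E)).
Proof.
  intros HE. unfold Phi. destruct (Req_EM_T E 0) as [-> | HE0].
  - rewrite Rminus_0_r, sqrt_1. ring.
  - assert (Hs : 0 < sqrt E) by (apply sqrt_lt_R0; lra).
    assert (Hc : 0 < sqrt (1 - E)) by (apply sqrt_lt_R0; lra).
    assert (Hsc : sqrt E ^ 2 + sqrt (1 - E) ^ 2 = 1) by (rewrite !pow2_sqrt; lra).
    pose proof (RInt_sqrt_sub_tanh_sq _ _ Hs Hc Hsc) as HI.
    rewrite pow2_sqrt in HI by lra.
    unfold x_minus, x_plus. rewrite HI. unfold Rdiv. ring.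
Qed.

Lemma Phi_eq_quantum_iff (eps k E : R) :
  0 < eps -> 0 <= eps * k < 1 -> 0 <= E < 1 ->
  (Phi eps E = k * PI <-> E = 1 - (1 - eps * k) ^ 2).
Proof.
  intros Heps Hk HE. rewrite Phi_closed_form by exact HE.
  pose proof PI_RGT_0 as Hpi.
  assert (Hq : sqrt (1 - E) ^ 2 = 1 - E) by (apply pow2_sqrt; lra).
  split.
  - intros H.
    assert (Hroot : 1 - sqrt (1 - E) = eps * k).
    { apply (Rmult_eq_reg_l (PI / eps)); [| apply Rgt_not_eq, Rdiv_lt_0_compat; lra].
      rewrite H. field. lra. }
    replace (1 - eps * k) with (sqrt (1 - E)) by lra. lra.
  - intros ->.
    replace (1 - (1 - (1 - eps * k) ^ 2)) with ((1 - eps * k) ^ 2) by ring.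
    rewrite sqrt_pow2 by lra. field. lra.
Qed.

Lemma shift_neg1 (n : nat) : shift n (-1) = INR n.
Proof. unfold shift. simpl. field. Qed.

Lemma shift_pos1 (n : nat) : shift n 1 = INR n + 1.
Proof. unfold shift. simpl. field. Qed.

Theorem proposition5p1 (eps : R) (heps : 0 < eps) :
  (forall E : R, 0 <= E < 1 -> Phi eps E = PI / eps * (1 - sqrt (1 - E))) /\
  (forall (sigma : Z) (n : nat),
      (sigma = (-1)%Z \/ sigma = 1%Z) ->
      0 <= eps * shift n sigma < 1 ->
      (0 <= E_level eps n sigma < 1 /\
       forall E : R, 0 <= E < 1 ->
         (Phi eps E = shift n sigma * PI <-> E = E_level eps n sigma))) /\
  (forall n : nat, E_level eps n (-1)%Z = lambda_plus eps n) /\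
  (forall n : nat, E_level eps n 1%Z = lambda_minus eps n) /\
  E_level eps 0 (-1)%Z = 0.
Proof.
  split; [exact (Phi_closed_form eps) |].
  split.
  { intros sigma n _ Hk. split.
    - unfold E_level. nra.
    - intros E HE. exact (Phi_eq_quantum_iff eps (shift n sigma) E heps Hk HE). }
  split; [intros n; unfold E_level, lambda_plus; now rewrite shift_neg1 |].
  split; [intros n; unfold E_level, lambda_minus; now rewrite shift_pos1 |].
  unfold E_level. rewrite shift_neg1. simpl. ring.
Qed.
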